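(* Let $s,t\in\Sigma^n$ and let $d:\Sigma^n\to\Sigma$ be a depth assignment such that $d_s=d_t$, or $s$ and $t$ share at least one symbol. Then \[D\left(P\left(H(s)+e_{d_s}\right)-P\left(H(t)+e_{d_t}\right)\right)\le n.\]
   Context: Let $k\ge 1$ be an integer, $\Sigma=\{0,1,\dots,k-1\}$, $n\ge 1$. A depth assignment is any function $d:\Sigma^n\to\Sigma$, written $s\mapsto d_s$. The histogram $H(s):\Sigma\to\mathbb{Z}$ of a string $s$ gives the number of occurrences of each symbol in $s$; $e_b$ is the indicator function of $b\in\Sigma$. For $H:\Sigma\to\mathbb{Z}$, the partial sum is $P(H)(i)=\sum_{j=0}^{i}H(j)$ and the difference is $D(H)=\max_{i,j\in\Sigma}(H(i)-H(j))$. ''Share a symbol'' means some $c\in\Sigma$ occurs in both $s$ and $t$. *)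

From mathcomp Require Import all_boot all_order all_algebra.
Set Implicit Arguments. Unset Strict Implicit. Unset Printing Implicit Defensive.
Import Order.TTheory GRing.Theory Num.Theory.
Local Open Scope ring_scope.

(* Alphabet Sigma = 'I_k = {0,...,k-1}; strings of length n are n.-tuple 'I_k. *)

Definition hist (k n : nat) (s : n.-tuple 'I_k) : 'I_k -> int :=
  fun c => (count_mem c s)%:Z.

Definition ind (k : nat) (b : 'I_k) : 'I_k -> int :=
  fun c => (c == b)%:Z.

Definition fadd (k : nat) (f g : 'I_k -> int) : 'I_k -> int := fun c => f c + g c.
Definition fsub (k : nat) (f g : 'I_k -> int) : 'I_k -> int := fun c => f c - g c.

Definition psum (k : nat) (f : 'I_k -> int) : 'I_k -> int :=
  fun i => \sum_(j < k | (j <= i)%N) f j.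

(* Difference D(H) = max_{i,j} (H(i) - H(j)).  The fold starts at 0, which is
   harmless since the pair (i,i) contributes 0 and Sigma is nonempty (k >= 1). *)
Definition Ddiff (k : nat) (f : 'I_k -> int) : int :=
  \big[Num.max/0]_(ij : 'I_k * 'I_k) (f ij.1 - f ij.2).

Definition share_symbol (k n : nat) (s t : n.-tuple 'I_k) : Prop :=
  exists c : 'I_k, c \in s /\ c \in t.

From mathcomp Require Import all_boot all_order all_algebra.
From mathcomp Require Import zify.
Set Implicit Arguments.
Unset Strict Implicit.
Unset Printing Implicit Defensive.
Import Order.TTheory GRing.Theory Num.Theory.
Local Open Scope ring_scope.

(* The partial sum of H(s) + e_b at i counts the letters <= i of the word b :: s,
   so the difference of the partial sums at j <= i counts the letters of b :: s
   in the window (j, i].  A window can hold all n + 1 letters of d_s :: s only if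
   it holds every letter of s together with d_s; it then also holds d_t = d_s or
   a letter shared with t, so the corresponding count for d_t :: t is at least 1. *)

Lemma sum_count_mem (T : finType) (P : pred T) (s : seq T) :
  (\sum_(x | P x) count_mem x s)%N = count P s.
Proof.
elim: s => [|a s IHs] /=; first by rewrite big1.
rewrite big_split /= IHs; congr (_ + _)%N.
rewrite big_mkcond (eq_bigr (fun x => if x == a then P a : nat else 0%N)).
  by rewrite -big_mkcond big_pred1_eq.
by move=> x _; rewrite eq_sym; case: eqP => [->|]; case: (P _).
Qed.

Lemma psum_hist_ind (k n : nat) (s : n.-tuple 'I_k) (b i : 'I_k) :
  psum (fadd (hist s) (ind b)) i = (count (fun c : 'I_k => (c <= i)%N) (b :: s))%:Z.
Proof.
rewrite -sum_count_mem (big_morph Posz PoszD (erefl 0%:Z)).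
by apply: eq_bigr => j _; rewrite /fadd /hist /ind /= eq_sym PoszD addrC.
Qed.

Lemma count_le_split (k : nat) (s : seq 'I_k) (i j : 'I_k) : (j <= i)%N ->
  count (fun c : 'I_k => (c <= i)%N) s =
  (count (fun c : 'I_k => (c <= j)%N) s + count (fun c : 'I_k => (j < c <= i)%N) s)%N.
Proof.
move=> le_ji; elim: s => [|a s IHs] //=; rewrite IHs.
by case: (leqP a j) => aj; case: (leqP a i) => ai /=; lia.
Qed.

Lemma psum_hist_ind_sub (k n : nat) (s : n.-tuple 'I_k) (b i j : 'I_k) :
  (j <= i)%N ->
  psum (fadd (hist s) (ind b)) i - psum (fadd (hist s) (ind b)) j =
  (count (fun c : 'I_k => (j < c <= i)%N) (b :: s))%:Z.
Proof.
move=> le_ji; rewrite !psum_hist_ind (count_le_split (b :: s) le_ji) PoszD.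
by rewrite addrAC subrr add0r.
Qed.

Lemma count_cons_le_size (T : eqType) (p : pred T) (s t : seq T) (b c : T) :
  b = c \/ (exists x, x \in s /\ x \in t) ->
  (count p (b :: s) <= size s + count p (c :: t))%N.
Proof.
move=> shared /=.
have [lt_s|ge_s] := ltnP (count p s) (size s); first by case: (p b); lia.
have cnt_s : count p s = size s by apply/eqP; rewrite eqn_leq count_size.
have /allP all_ps : all p s by rewrite all_count cnt_s.
rewrite cnt_s; case pb: (p b) => /=; last by lia.
case: shared => [<-|[x [xs xt]]]; first by rewrite pb; lia.
have : has p t by apply/hasP; exists x => //; exact: all_ps.
by rewrite has_count; lia.
Qed.

Lemma Ddiff_le (k : nat) (f : 'I_k -> int) (m : int) :
  0 <= m -> (forall i j, f i - f j <= m) -> Ddiff f <= m.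
Proof. by move=> m_ge0 fm; apply: bigmax_le => // ij _; exact: fm. Qed.

Lemma psum_gap_le (k n : nat) (s t : n.-tuple 'I_k) (bs bt i j : 'I_k) :
  bs = bt \/ share_symbol s t -> (j <= i)%N ->
  (psum (fadd (hist s) (ind bs)) i - psum (fadd (hist s) (ind bs)) j)
  - (psum (fadd (hist t) (ind bt)) i - psum (fadd (hist t) (ind bt)) j) <= n%:Z.
Proof.
move=> shared le_ji; rewrite !psum_hist_ind_sub // lerBlDr -PoszD lez_nat.
by rewrite -{2}(size_tuple s); exact: count_cons_le_size.
Qed.

Theorem lemma8 (k n : nat) (hk : (1 <= k)%N) (hn : (1 <= n)%N)
  (d : n.-tuple 'I_k -> 'I_k) (s t : n.-tuple 'I_k) :
  d s = d t \/ share_symbol s t ->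
  Ddiff (fsub (psum (fadd (hist s) (ind (d s))))
              (psum (fadd (hist t) (ind (d t))))) <= n%:Z.
Proof.
move=> shared; apply: Ddiff_le => // i j; rewrite /fsub.
have shared' : d t = d s \/ share_symbol t s.
  by case: shared => [->|[c [cs ct]]]; [left | right; exists c].
case: (leqP j i) => [le_ji|/ltnW le_ij].
- by have := psum_gap_le shared le_ji; lia.
- by have := psum_gap_le shared' le_ij; lia.
Qed.
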